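(* Each of the following representations $\zeta_i:\mathrm{TVB}_2\to\mathrm{GL}_3(\mathbb{C})$, $1\le i\le 8$ (for every admissible choice of parameters), is unfaithful, i.e. not injective: \begin{itemize} \item[(1)] $\zeta_1(\sigma_1)=\begin{pmatrix} d & b\\ b/x^2 & d\end{pmatrix}\oplus 1$, $\zeta_1(\rho_1)=\begin{pmatrix} 0 & x\\ 1/x & 0\end{pmatrix}\oplus 1$, $\zeta_1(\gamma_1)=\mathrm{diag}(-1,1,1)$, $\zeta_1(\gamma_2)=\mathrm{diag}(1,-1,1)$, where $b,d,x\in\mathbb{C}$, $b^2-d^2x^2\neq 0$, $x\neq 0$. \item[(2)] $\zeta_2(\sigma_1)=\begin{pmatrix} \frac{2bw+dx}{x} & b\\ \frac{b-bw^2}{x^2} & d\end{pmatrix}\oplus 1$, $\zeta_2(\rho_1)=\begin{pmatrix} w & x\\ \frac{1-w^2}{x} & -w\end{pmatrix}\oplus 1$, $\zeta_2(\gamma_1)=\zeta_2(\gamma_2)=I_3$, where $b,d,w,x\in\mathbb{C}$, $x\neq 0$, $dx+bw\neq \pm b$. \item[(3)] $\zeta_3(\sigma_1)=\begin{pmatrix} a & b\\ c & d\end{pmatrix}\oplus 1$, $\zeta_3(\rho_1)=\mathrm{diag}(-1,-1,1)$, $\zeta_3(\gamma_1)=\zeta_3(\gamma_2)=I_3$, $ad-bc\neq 0$. \item[(4)] $\zeta_4(\sigma_1)=\begin{pmatrix} a & b\\ c & d\end{pmatrix}\oplus 1$, $\zeta_4(\rho_1)=\zeta_4(\gamma_1)=\zeta_4(\gamma_2)=I_3$,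 $ad-bc\neq 0$. \item[(5)] $\zeta_5(\sigma_1)=\begin{pmatrix} a & 0\\ c & d\end{pmatrix}\oplus 1$, $\zeta_5(\rho_1)=\begin{pmatrix} -1 & 0\\ \frac{2c}{d-a} & 1\end{pmatrix}\oplus 1$, $\zeta_5(\gamma_1)=\zeta_5(\gamma_2)=I_3$, $ad\neq 0$, $a\neq d$. \item[(6)] $\zeta_6(\sigma_1)=\begin{pmatrix} a & 0\\ c & d\end{pmatrix}\oplus 1$, $\zeta_6(\rho_1)=\begin{pmatrix} 1 & 0\\ \frac{2c}{a-d} & -1\end{pmatrix}\oplus 1$, $\zeta_6(\gamma_1)=\zeta_6(\gamma_2)=I_3$, $ad\neq 0$, $a\neq d$. \item[(7)] $\zeta_7(\sigma_1)=\mathrm{diag}(d,d,1)$, $\zeta_7(\rho_1)=\begin{pmatrix} 1 & 0\\ y & -1\end{pmatrix}\oplus 1$, $\zeta_7(\gamma_1)=\zeta_7(\gamma_2)=I_3$, $d\neq 0$. \item[(8)] $\zeta_8(\sigma_1)=\mathrm{diag}(d,d,1)$, $\zeta_8(\rho_1)=\begin{pmatrix} -1 & 0\\ y & 1\end{pmatrix}\oplus 1$, $\zeta_8(\gamma_1)=\zeta_8(\gamma_2)=I_3$, $d\neq 0$. \end{itemize} (All parameters are complex numbers.)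
   Context: The twisted virtual braid group $\mathrm{TVB}_2$ is the group with generators $\sigma_1,\rho_1,\gamma_1,\gamma_2$ and defining relations $\rho_1^2=1$, $\gamma_1^2=\gamma_2^2=1$, $\gamma_1\gamma_2=\gamma_2\gamma_1$, $\rho_1\gamma_1=\gamma_2\rho_1$, $\rho_1\sigma_1\rho_1=\gamma_2\gamma_1\sigma_1\gamma_1\gamma_2$. For a $2\times 2$ matrix $M$, $M\oplus 1$ denotes the $3\times3$ block-diagonal matrix with blocks $M$ and $1$. A representation is faithful if it is injective. *)

From mathcomp Require Import all_boot all_algebra.
From mathcomp Require Import complex Rstruct.
Set Implicit Arguments. Unset Strict Implicit. Unset Printing Implicit Defensive.
Import GRing.Theory.
Local Open Scope ring_scope.

Definition C : Type := Rdefinitions.R[i].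

Inductive gen := sig1 | rho1 | gam1 | gam2.

(* a letter is a generator with an exponent sign: (g, false) = g, (g, true) = g^-1 *)
Definition letter := (gen * bool)%type.
Definition word := list letter.

Definition g_ (g : gen) : letter := (g, false).
Definition gi_ (g : gen) : letter := (g, true).
Definition inv_letter (l : letter) : letter := (l.1, ~~ l.2).

(* defining relators (relation u = v is encoded as the relator u v^-1) *)
Definition relators : list word :=
  [:: [:: g_ rho1; g_ rho1];
      [:: g_ gam1; g_ gam1];
      [:: g_ gam2; g_ gam2];
      [:: g_ gam1; g_ gam2; gi_ gam1; gi_ gam2];
      [:: g_ rho1; g_ gam1; gi_ rho1; gi_ gam2];
      (* rho1 sig1 rho1 = gam2 gam1 sig1 gam1 gam2 *)
      [:: g_ rho1; g_ sig1; g_ rho1;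
          gi_ gam2; gi_ gam1; gi_ sig1; gi_ gam1; gi_ gam2] ].

Inductive tvb_eq : word -> word -> Prop :=
| tvb_refl w : tvb_eq w w
| tvb_sym u v : tvb_eq u v -> tvb_eq v u
| tvb_trans u v w : tvb_eq u v -> tvb_eq v w -> tvb_eq u w
| tvb_free u v (l : letter) : tvb_eq (u ++ l :: inv_letter l :: v) (u ++ v)
| tvb_rel u v r : List.In r relators -> tvb_eq (u ++ r ++ v) (u ++ v).

Definition mx_of_letter (rep : gen -> 'M[C]_3) (l : letter) : 'M[C]_3 :=
  if l.2 then invmx (rep l.1) else rep l.1.

Definition eval_word (rep : gen -> 'M[C]_3) (w : word) : 'M[C]_3 :=
  foldr (fun l acc => mx_of_letter rep l *m acc) 1%:M w.

Definition unfaithful (rep : gen -> 'M[C]_3) : Prop :=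
  exists w : word, ~ tvb_eq w [::] /\ eval_word rep w = 1%:M.

Definition mx2 (a b c d : C) : 'M[C]_2 :=
  \matrix_(i < 2, j < 2)
    if i == 0 :> nat then (if j == 0 :> nat then a else b)
    else (if j == 0 :> nat then c else d).

Definition oplus1 (M : 'M[C]_2) : 'M[C]_3 :=
  \matrix_(i < 3, j < 3)
    if (i < 2)%N && (j < 2)%N then M (inord i) (inord j)
    else (i == j :> nat)%:R.

Definition diag3 (a b c : C) : 'M[C]_3 :=
  \matrix_(i < 3, j < 3)
    if i == j :> nat then (if i == 0 :> nat then a else if i == 1 :> nat then b else c)
    else 0.

Definition mkrep (s r g1 g2 : 'M[C]_3) (g : gen) : 'M[C]_3 :=
  match g with sig1 => s | rho1 => r | gam1 => g1 | gam2 => g2 end.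

Definition zeta1 (b d x : C) : gen -> 'M[C]_3 :=
  mkrep (oplus1 (mx2 d b (b / x ^+ 2) d)) (oplus1 (mx2 0 x (1 / x) 0))
        (diag3 (-1) 1 1) (diag3 1 (-1) 1).

Definition zeta2 (b d w x : C) : gen -> 'M[C]_3 :=
  mkrep (oplus1 (mx2 ((2 * b * w + d * x) / x) b ((b - b * w ^+ 2) / x ^+ 2) d))
        (oplus1 (mx2 w x ((1 - w ^+ 2) / x) (- w)))
        1%:M 1%:M.

Definition zeta3 (a b c d : C) : gen -> 'M[C]_3 :=
  mkrep (oplus1 (mx2 a b c d)) (diag3 (-1) (-1) 1) 1%:M 1%:M.

Definition zeta4 (a b c d : C) : gen -> 'M[C]_3 :=
  mkrep (oplus1 (mx2 a b c d)) 1%:M 1%:M 1%:M.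

Definition zeta5 (a c d : C) : gen -> 'M[C]_3 :=
  mkrep (oplus1 (mx2 a 0 c d)) (oplus1 (mx2 (-1) 0 (2 * c / (d - a)) 1)) 1%:M 1%:M.

Definition zeta6 (a c d : C) : gen -> 'M[C]_3 :=
  mkrep (oplus1 (mx2 a 0 c d)) (oplus1 (mx2 1 0 (2 * c / (a - d)) (-1))) 1%:M 1%:M.

Definition zeta7 (d y : C) : gen -> 'M[C]_3 :=
  mkrep (diag3 d d 1) (oplus1 (mx2 1 0 y (-1))) 1%:M 1%:M.

Definition zeta8 (d y : C) : gen -> 'M[C]_3 :=
  mkrep (diag3 d d 1) (oplus1 (mx2 (-1) 0 y 1)) 1%:M 1%:M.

From mathcomp Require Import all_boot all_algebra.
From mathcomp Require Import complex Rstruct.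
From mathcomp Require Import ring.
Import GRing.Theory.
Local Open Scope ring_scope.

(** The assignment sigma1 |-> (0 3), rho1 |-> (0 2)(1 3), gamma1 |-> (0 1),
    gamma2 |-> (2 3) respects the defining relations, so TVB_2 acts on
    {0,1,2,3}; as gamma1 and the commutator [sigma1, gamma1 gamma2] act
    nontrivially, they are nontrivial in TVB_2.  Every zeta_i with i >= 2
    sends gamma1 to the identity, while zeta_1(gamma1 gamma2) = diag(-1,-1,1)
    commutes with zeta_1(sigma1), so zeta_1 kills the commutator. *)

Definition gen_perm (g : gen) (p : nat) : nat :=
  match g, p with
  | sig1, 0 => 3 | sig1, 3 => 0
  | rho1, 0 => 2 | rho1, 1 => 3 | rho1, 2 => 0 | rho1, 3 => 1
  | gam1, 0 => 1 | gam1, 1 => 0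
  | gam2, 2 => 3 | gam2, 3 => 2
  | _, _ => p
  end%N.

(* Every generator acts by an involution, so a letter and its inverse act alike. *)
Definition word_perm (w : word) (p : nat) : nat :=
  foldr (fun l => gen_perm l.1) p w.

Lemma gen_permK g : involutive (gen_perm g).
Proof. by case: g => -[|[|[|[|p]]]]. Qed.

Lemma word_perm_cat u v p : word_perm (u ++ v) p = word_perm u (word_perm v p).
Proof. by elim: u => //= l u ->. Qed.

Lemma word_perm_relator r : List.In r relators -> word_perm r =1 id.
Proof.
by move=> /= [<-|[<-|[<-|[<-|[<-|[<-|[]]]]]]] [|[|[|[|p]]]].
Qed.

Lemma tvb_eq_word_perm u v : tvb_eq u v -> word_perm u =1 word_perm v.
Proof.
elim=> {u v} [w|u v _ IH|u v w _ IH1 _ IH2|u v l|u v r rel_r] p.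
- by [].
- by rewrite IH.
- by rewrite IH1 IH2.
- by case: l => g b; rewrite !word_perm_cat /= gen_permK.
- by rewrite !word_perm_cat (word_perm_relator _ rel_r).
Qed.

Lemma tvb_neq_nil_of_perm w p : word_perm w p != p -> ~ tvb_eq w [::].
Proof. by move=> /eqP moved /tvb_eq_word_perm fixed; apply: moved; rewrite fixed. Qed.

Lemma gen_neq1 g : ~ tvb_eq [:: g_ g] [::].
Proof.
by case: g; [apply: (@tvb_neq_nil_of_perm _ 0)..|apply: (@tvb_neq_nil_of_perm _ 2)].
Qed.

Definition sig1_gam12_commutator : word :=
  [:: g_ sig1; g_ gam1; g_ gam2; gi_ sig1; gi_ gam2; gi_ gam1].

Lemma sig1_gam12_commutator_neq1 : ~ tvb_eq sig1_gam12_commutator [::].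
Proof. exact: (@tvb_neq_nil_of_perm _ 0). Qed.

Lemma mx2_mul a b c d a' b' c' d' :
  mx2 a b c d *m mx2 a' b' c' d' =
  mx2 (a * a' + b * c') (a * b' + b * d') (c * a' + d * c') (c * b' + d * d').
Proof.
apply/matrixP => i j; rewrite !mxE !big_ord_recr big_ord0 /= !mxE.
by case: i => [[|[|i]] ?] //; case: j => [[|[|j]] ?] //=; rewrite add0r.
Qed.

Lemma mx2_1 : mx2 1 0 0 1 = 1%:M.
Proof.
by apply/matrixP => i j; rewrite !mxE; case: i => [[|[|i]] ?] //; case: j => [[|[|j]] ?].
Qed.

Lemma mx2_unit a b c d : a * d - b * c != 0 -> mx2 a b c d \in unitmx.
Proof.
move=> det_neq0; set D := a * d - b * c.
suff /mulmx1_unit[] : mx2 a b c d *m mx2 (d / D) (- b / D) (- c / D) (a / D) = 1%:M by [].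
by rewrite mx2_mul -mx2_1; congr mx2; rewrite /D; field.
Qed.

Lemma oplus1_mul (M N : 'M[C]_2) : oplus1 M *m oplus1 N = oplus1 (M *m N).
Proof.
have ord0E : widen_ord (leqnSn 1) ord_max = inord 0 :> 'I_2.
  by apply/val_inj; rewrite /= inordK.
have ord1E : ord_max = inord 1 :> 'I_2 by apply/val_inj; rewrite /= inordK.
apply/matrixP => i j; rewrite !mxE !big_ord_recr big_ord0 /= !mxE.
case: i => [[|[|[|i]]] ?] //; case: j => [[|[|[|j]]] ?] //=.
all: rewrite ?mxE ?big_ord_recr ?big_ord0 /= ?ord0E ?ord1E.
all: by rewrite ?mul0r ?mulr0 ?add0r ?addr0 ?mul1r ?mulr1.
Qed.

Lemma oplus1_1 : oplus1 1%:M = 1%:M.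
Proof.
apply/matrixP => i j; rewrite !mxE.
by case: i => [[|[|[|i]]] ?] //; case: j => [[|[|[|j]]] ?] //=; rewrite -val_eqE /= !inordK.
Qed.

Lemma oplus1_unit (M : 'M[C]_2) : M \in unitmx -> oplus1 M \in unitmx.
Proof.
move=> M_unit; suff /mulmx1_unit[] : oplus1 M *m oplus1 (invmx M) = 1%:M by [].
by rewrite oplus1_mul mulmxV ?oplus1_1.
Qed.

Lemma diag3_oplus1 a b : diag3 a b 1 = oplus1 (mx2 a 0 0 b).
Proof.
apply/matrixP => i j; rewrite !mxE.
by case: i => [[|[|[|i]]] ?] //; case: j => [[|[|[|j]]] ?] //=; rewrite ?mxE ?inordK.
Qed.

Lemma diag3_unit a b : a * b != 0 -> diag3 a b 1 \in unitmx.
Proof. by move=> ab_neq0; rewrite diag3_oplus1 oplus1_unit ?mx2_unit ?mulr0 ?subr0. Qed.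

Lemma unfaithful_of_gen_id (rep : gen -> 'M[C]_3) g :
  rep g = 1%:M -> unfaithful rep.
Proof.
move=> rep_g; exists [:: g_ g]; split; first exact: gen_neq1.
by rewrite /eval_word /= mulmx1.
Qed.

Lemma commutator_eq1 (R : unitRingType) (s g1 g2 : R) :
  s \is a GRing.unit -> g1 \is a GRing.unit -> g2 \is a GRing.unit ->
  s * (g1 * g2) = g1 * g2 * s -> s * (g1 * (g2 * (s^-1 * (g2^-1 * g1^-1)))) = 1.
Proof.
move=> s_unit g1_unit g2_unit comm_s.
have g_unit : g1 * g2 \is a GRing.unit by rewrite unitrMl.
by rewrite -invrM // !mulrA -(mulrA s) comm_s mulrK // divrr.
Qed.

Lemma unfaithful_of_commute (rep : gen -> 'M[C]_3) :
  rep sig1 \in unitmx -> rep gam1 \in unitmx -> rep gam2 \in unitmx ->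
  rep sig1 *m (rep gam1 *m rep gam2) = rep gam1 *m rep gam2 *m rep sig1 ->
  unfaithful rep.
Proof.
move=> S_unit G1_unit G2_unit comm_S.
exists sig1_gam12_commutator; split; first exact: sig1_gam12_commutator_neq1.
rewrite /eval_word /mx_of_letter /= mulmx1.
exact: (@commutator_eq1 'M[C]_3 _ _ _ S_unit G1_unit G2_unit comm_S).
Qed.

Lemma zeta1_unfaithful b d x :
  b ^+ 2 - d ^+ 2 * x ^+ 2 != 0 -> x != 0 -> unfaithful (zeta1 b d x).
Proof.
move=> disc_neq0 x_neq0; apply: unfaithful_of_commute => /=.
- have det_S : d * d - b * (b / x ^+ 2) = - (b ^+ 2 - d ^+ 2 * x ^+ 2) / x ^+ 2.
    by field.
  by rewrite oplus1_unit // mx2_unit // det_S mulf_neq0 ?oppr_eq0 ?invr_eq0 ?expf_neq0.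
- by rewrite diag3_unit // mulr1 oppr_eq0 oner_eq0.
- by rewrite diag3_unit // mul1r oppr_eq0 oner_eq0.
- rewrite !diag3_oplus1 !oplus1_mul !mx2_mul; congr (oplus1 (mx2 _ _ _ _)); ring.
Qed.

Theorem theorem3p2 :
  (forall b d x : C, b ^+ 2 - d ^+ 2 * x ^+ 2 != 0 -> x != 0 ->
     unfaithful (zeta1 b d x)) /\
  (forall b d w x : C, x != 0 -> d * x + b * w != b -> d * x + b * w != - b ->
     unfaithful (zeta2 b d w x)) /\
  (forall a b c d : C, a * d - b * c != 0 -> unfaithful (zeta3 a b c d)) /\
  (forall a b c d : C, a * d - b * c != 0 -> unfaithful (zeta4 a b c d)) /\
  (forall a c d : C, a * d != 0 -> a != d -> unfaithful (zeta5 a c d)) /\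
  (forall a c d : C, a * d != 0 -> a != d -> unfaithful (zeta6 a c d)) /\
  (forall d y : C, d != 0 -> unfaithful (zeta7 d y)) /\
  (forall d y : C, d != 0 -> unfaithful (zeta8 d y)).
Proof.
split; first exact: zeta1_unfaithful.
by do ![split] => *; apply: (@unfaithful_of_gen_id _ gam1).
Qed.
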